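(* Let $p\ge 2$ and let $J$ be a periodic Jacobi operator on $\ell^2(\mathbb{Z})$ with period $p$, given by $(J\psi)_n=a_{n-1}\psi_{n-1}+b_n\psi_n+a_n\psi_{n+1}$, where $a_n>0$, $b_n\in\mathbb{R}$, $a_{n+p}=a_n$, $b_{n+p}=b_n$ for all $n\in\mathbb{Z}$. Let $A:=(a_1a_2\cdots a_p)^{1/p}$, let $\sigma_1,\dots,\sigma_p$ be the spectral bands of $J$, and let $s:=\lambda_p^{\max}-\lambda_1^{\min}$. If $d$ is a real number with $s\le d$, then $$\frac{1}{\log(d/A)}\le\sum_{n=1}^{p}\frac{1}{\log\big(4d/|\sigma_n|\big)}.$$
   Context: Spectral structure: the spectrum of $J$ is $\sigma(J)=\{\lambda\in\mathbb{R}: |\Delta(\lambda)|\le 2\}$, where $\Delta(\lambda)=\operatorname{tr}\big(A_p(\lambda)A_{p-1}(\lambda)\cdots A_1(\lambda)\big)$ with $A_n(\lambda)=\begin{pmatrix}(\lambda-b_n)/a_n & -a_{n-1}/a_n\\ 1&0\end{pmatrix}$ (the discriminant, a real polynomial of degree $p$). It is a standard fact that this set is a union of $p$ closed intervals (bands) $\sigma_n=[\lambda_n^{\min},\lambda_n^{\max}]$, $1\le n\le p$, with $\lambda_n^{\min}<\lambda_n^{\max}\le\lambda_{n+1}^{\min}$ (bands may touch but do not overlap); on each band $\Delta$ is monotone and maps it onto $[-2,2]$. The spectral gaps are $\gamma_n=(\lambda_n^{\max},\lambda_{n+1}^{\min})$, $1\le n\le p-1$ (possibly empty). $|\cdot|$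 denotes Lebesgue measure (length). *)

From Stdlib Require Import Reals ZArith List.
Import ListNotations.
Open Scope R_scope.

Record M2 := mkM2 { m11 : R; m12 : R; m21 : R; m22 : R }.

Definition M2id : M2 := mkM2 1 0 0 1.

Definition M2mul (X Y : M2) : M2 :=
  mkM2 (m11 X * m11 Y + m12 X * m21 Y) (m11 X * m12 Y + m12 X * m22 Y)
       (m21 X * m11 Y + m22 X * m21 Y) (m21 X * m12 Y + m22 X * m22 Y).

Definition M2tr (X : M2) : R := m11 X + m22 X.

Definition transfer (a b : Z -> R) (lam : R) (n : Z) : M2 :=
  mkM2 ((lam - b n) / a n) (- a (n - 1)%Z / a n) 1 0.

Fixpoint transfer_prod (a b : Z -> R) (lam : R) (k : nat) : M2 :=
  match k with
  | O => M2id
  | S k' => M2mul (transfer a b lam (Z.of_nat (S k'))) (transfer_prod a b lam k')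
  end.

Definition discriminant (a b : Z -> R) (p : nat) (lam : R) : R :=
  M2tr (transfer_prod a b lam p).

Definition sum1 (p : nat) (f : nat -> R) : R := fold_right Rplus 0 (map f (seq 1 p)).
Definition prod1 (p : nat) (f : nat -> R) : R := fold_right Rmult 1 (map f (seq 1 p)).

(* lo n, hi n (1 <= n <= p) are the endpoints lambda_n^min, lambda_n^max of the
   spectral bands sigma_n = [lo n, hi n] of J: the spectrum
   {lam | |Delta lam| <= 2} is the union of the p bands, ordered and
   non-overlapping, and Delta is monotone on each band mapping it onto [-2,2].
   These properties determine the bands uniquely. *)
Definition spectral_bands (a b : Z -> R) (p : nat) (lo hi : nat -> R) : Prop :=
  (forall n, (1 <= n <= p)%nat -> lo n < hi n) /\
  (forall n, (1 <= n < p)%nat -> hi n <= lo (S n)) /\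
  (forall lam, Rabs (discriminant a b p lam) <= 2 <->
     exists n, (1 <= n <= p)%nat /\ lo n <= lam <= hi n) /\
  (forall n, (1 <= n <= p)%nat ->
     ((forall x y, lo n <= x <= hi n -> lo n <= y <= hi n -> x <= y ->
         discriminant a b p x <= discriminant a b p y) \/
      (forall x y, lo n <= x <= hi n -> lo n <= y <= hi n -> x <= y ->
         discriminant a b p y <= discriminant a b p x)) /\
     (forall t, -2 <= t <= 2 <->
        exists x, lo n <= x <= hi n /\ discriminant a b p x = t)).

(* The discriminant Delta is a real polynomial of degree p with leading coefficient
   1 / (a_1 ... a_p) = A^-p, and it vanishes at a point x_n inside each band, so
   Delta(y) = A^-p (y - x_1) ... (y - x_p).  At an endpoint y of sigma_n we have
   |Delta(y)| = 2, and every |y - x_i| is at most the length s <= d of the convex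
   hull of the spectrum, hence 2 A^p <= |y - x_n| d^(p-1).  Adding the bounds at
   both endpoints gives 4 A^p <= |sigma_n| d^(p-1), i.e.
   log (4d / |sigma_n|) <= p log (d / A); summing the reciprocals over the p bands
   gives the inequality. *)

From Stdlib Require Import Reals ZArith List Lra Lia ClassicalEpsilon.
From mathcomp Require all_boot all_algebra Rstruct ring.
Open Scope R_scope.

Module DiscriminantPolynomial.
Import mathcomp.boot.all_boot mathcomp.algebra.all_algebra.
Import mathcomp.reals_stdlib.Rstruct mathcomp.algebra_tactics.ring.
Import GRing.Theory Num.Theory.

Section TransferPolynomial.
Local Open Scope ring_scope.
Variables a b : Z -> R.
Hypothesis a_neq0 : forall n, a n != 0.

Fixpoint transfer_prod_poly (k : nat) : {poly R} * {poly R} * {poly R} * {poly R} :=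
  if k is k'.+1 then
    let: (p11, p12, p21, p22) := transfer_prod_poly k' in
    let q := (a (Z.of_nat k))^-1 *: ('X - (b (Z.of_nat k))%:P) in
    let e := - a (Z.sub (Z.of_nat k) 1) / a (Z.of_nat k) in
    (q * p11 + e *: p21, q * p12 + e *: p22, p11, p12)
  else (1, 0, 0, 1).

Lemma horner_transfer_prod_poly lam k :
  let: (p11, p12, p21, p22) := transfer_prod_poly k in
  [/\ m11 (transfer_prod a b lam k) = p11.[lam],
      m12 (transfer_prod a b lam k) = p12.[lam],
      m21 (transfer_prod a b lam k) = p21.[lam] &
      m22 (transfer_prod a b lam k) = p22.[lam]].
Proof.
elim: k => [|k IH] /=; first by rewrite !hornerE.
case: (transfer_prod_poly k) IH => [[[p11 p12] p21] p22] [-> -> -> ->].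
rewrite /M2mul /transfer /= !hornerE.
by split; rewrite ?RplusE ?RmultE ?RdivE ?RminusE ?RoppE; ring.
Qed.

Lemma size_transfer_prod_poly k :
  let: (p11, p12, p21, p22) := transfer_prod_poly k in
  [/\ size p11 = k.+1, lead_coef p11 = \prod_(i < k) (a (Z.of_nat i.+1))^-1,
      (size p12 <= k)%N, (size p21 <= k)%N & (size p22 <= k.+1)%N].
Proof.
elim: k => [|k IH] /=.
  by rewrite !size_polyC lead_coefC big_ord0 oner_neq0 eqxx.
case: (transfer_prod_poly k) IH => [[[p11 p12] p21] p22] [S11 L11 S12 S21 S22].
set c := (a _)^-1; set q := c *: _; set e := - _ / _.
have c_neq0 : c != 0 by rewrite invr_eq0.
have Sq : size q = 2%N by rewrite size_scale // size_XsubC.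
have Sqp11 : size (q * p11) = k.+2.
  by rewrite size_mul -?size_poly_eq0 ?Sq ?S11.
have Sep21 : (size (e *: p21) < k.+2)%N.
  by rewrite (leq_ltn_trans (size_scale_leq _ _)) // ltnS (leq_trans S21).
split.
- by rewrite size_polyDl Sqp11.
- rewrite lead_coefDl ?Sqp11 // lead_coefM lead_coefZ lead_coefXsubC mulr1 L11.
  by rewrite big_ord_recr mulrC.
- rewrite (leq_trans (size_polyD _ _)) // geq_max (leq_trans (size_scale_leq _ _)) //.
  by rewrite (leq_trans (size_polyMleq _ _)) // Sq add2n ltnS.
- by rewrite S11.
- exact: leq_trans S12 (leqW (leqnSn k)).
Qed.

Definition discriminant_poly k : {poly R} :=
  let: (p11, _, _, p22) := transfer_prod_poly k in p11 + p22.

Lemma horner_discriminant_poly k lam :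
  discriminant a b k lam = (discriminant_poly k).[lam].
Proof.
rewrite /discriminant /M2tr /discriminant_poly.
have := horner_transfer_prod_poly lam k.
by case: (transfer_prod_poly k) => [[[p11 p12] p21] p22] [-> _ _ ->]; rewrite hornerD.
Qed.

Lemma size_lead_discriminant_poly k :
  size (discriminant_poly k.+1) = k.+2 /\
  lead_coef (discriminant_poly k.+1) = \prod_(i < k.+1) (a (Z.of_nat i.+1))^-1.
Proof.
have := size_transfer_prod_poly k.+1; have := size_transfer_prod_poly k.
rewrite /discriminant_poly /=.
case: (transfer_prod_poly k) => [[[p11 p12] p21] p22] [_ _ S12 _ _] /= [S11 L11 _ _ _].
move: (_ + _ *: p21) S11 L11 => p11' S11 L11.
by rewrite size_polyDl ?lead_coefDl // S11 ltnS (leq_trans S12).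
Qed.

End TransferPolynomial.

Lemma prod1E p (f : nat -> R) : prod1 p f = (\prod_(i < p) f i.+1)%R.
Proof.
suff prod_seq m :
    fold_right Rmult 1 (map f (List.seq m p)) = (\prod_(i < p) f (m + i)%N)%R.
  exact: prod_seq.
elim: p m => [|p IH] m /=; first by rewrite big_ord0.
by rewrite big_ord_recl IH addn0; under eq_bigr do rewrite addSnnS.
Qed.

Lemma discriminant_root_factor a b k (x : nat -> R) :
  (0 < k)%coq_nat -> (forall n, a n <> 0) ->
  (forall i j, (1 <= i)%coq_nat -> (i < j)%coq_nat -> (j <= k)%coq_nat -> x i <> x j) ->
  (forall i, (1 <= i)%coq_nat -> (i <= k)%coq_nat -> discriminant a b k (x i) = 0) ->
  forall y, discriminant a b k y =
    / prod1 k (fun n => a (Z.of_nat n)) * prod1 k (fun i => y - x i).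
Proof.
case: k => [/ssrnat.ltP // | k] _ a_neq0 x_inj x_root y.
have a_neq0' n : a n != 0 by apply/eqP.
have [Ssize Slead] := size_lead_discriminant_poly a b a_neq0' k.
set rs := [seq x i.+1 | i <- iota 0 k.+1].
have rs_roots : all (root (discriminant_poly a b k.+1)) rs.
  apply/allP => _ /mapP [i + ->]; rewrite mem_iota /= => ik.
  by rewrite /root -horner_discriminant_poly x_root //; apply/ssrnat.leP.
have rs_uniq : uniq_roots rs.
  rewrite uniq_rootsE map_inj_in_uniq ?iota_uniq // => i j.
  rewrite !mem_iota /= => ik jk xij.
  case: (ltngtP i j) => // [ij | ji]; exfalso;
    [apply: (x_inj i.+1 j.+1) | apply: (x_inj j.+1 i.+1)];
    by [|apply/ssrnat.leP|apply/ssrnat.ltP].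
have := all_roots_prod_XsubC _ rs_roots rs_uniq.
rewrite Ssize size_map size_iota => /(_ erefl) factor.
rewrite horner_discriminant_poly factor hornerZ horner_prod Slead big_map.
rewrite !prod1E prodfV; congr (_ * _).
rewrite [iota _ _](_ : _ = index_iota 0 k.+1); last by rewrite /index_iota subn0.
by rewrite big_mkord; apply: eq_bigr => i _; rewrite hornerXsubC.
Qed.

Lemma Rabs_prod1_le k (y d : R) (x : nat -> R) j :
  (1 <= j)%coq_nat -> (j <= k)%coq_nat ->
  (forall i, (1 <= i)%coq_nat -> (i <= k)%coq_nat -> Rabs (y - x i) <= d) ->
  Rabs (prod1 k (fun i => y - x i)) <= Rabs (y - x j) * d ^ Nat.pred k.
Proof.
case: k => [|k] /ssrnat.leP j_ge1 /ssrnat.leP j_le dist_le; first by case: j j_ge1 j_le.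
apply/RleP.
have RabsE z : Rabs z = `|z|%R by [].
rewrite prod1E RpowE RabsE normr_prod.
have jk : (j.-1 < k.+1)%N by case: j j_ge1 j_le.
rewrite (bigD1 (Ordinal jk)) //= prednK //.
have <- : (\prod_(i < k.+1 | i != Ordinal jk) d)%R = (d ^+ k)%R.
  by rewrite prodr_const cardC1 card_ord.
rewrite ler_wpM2l //.
apply: ler_prod => i _; rewrite normr_ge0; apply/RleP/dist_le; exact/ssrnat.leP.
Qed.
End DiscriminantPolynomial.

Lemma prod1_pos (n : nat) (f : nat -> R) : (forall m, 0 < f m) -> 0 < prod1 n f.
Proof.
intros f_pos; unfold prod1; induction (seq 1 n); simpl; [lra|].
now apply Rmult_lt_0_compat.
Qed.

Section SpectralBands.
Variables (a b : Z -> R) (p : nat) (lo hi : nat -> R).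
Hypothesis bands : spectral_bands a b p lo hi.

Lemma band_hi_le_lo i j : (1 <= i)%nat -> (i < j <= p)%nat -> hi i <= lo j.
Proof.
destruct bands as [lo_lt_hi [hi_le_lo_S _]].
intros i_ge1; induction j as [|j IH]; intros ij; [lia|].
destruct (Nat.eq_dec i j) as [->|i_neq_j].
- apply hi_le_lo_S; lia.
- assert (hi i <= lo j) by (apply IH; lia).
  assert (lo j < hi j) by (apply lo_lt_hi; lia).
  assert (hi j <= lo (S j)) by (apply hi_le_lo_S; lia).
  lra.
Qed.

Lemma band_in_hull n : (1 <= n <= p)%nat -> lo 1%nat <= lo n /\ hi n <= hi p.
Proof.
destruct bands as [lo_lt_hi _]; intros hn; split.
- destruct (Nat.eq_dec n 1) as [->|n_neq_1]; [lra|].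
  assert (hi 1%nat <= lo n) by (apply band_hi_le_lo; lia).
  assert (lo 1%nat < hi 1%nat) by (apply lo_lt_hi; lia).
  lra.
- destruct (Nat.eq_dec n p) as [->|n_neq_p]; [lra|].
  assert (hi n <= lo p) by (apply band_hi_le_lo; lia).
  assert (lo p < hi p) by (apply lo_lt_hi; lia).
  lra.
Qed.

Lemma Rabs_discriminant_band_ends n : (1 <= n <= p)%nat ->
  Rabs (discriminant a b p (lo n)) = 2 /\ Rabs (discriminant a b p (hi n)) = 2.
Proof.
destruct bands as [lo_lt_hi [_ [_ monotone_onto]]]; intros hn.
destruct (monotone_onto n hn) as [monotone onto].
assert (lo n < hi n) by (apply lo_lt_hi; lia).
assert (-2 <= discriminant a b p (lo n) <= 2).
{ apply onto; exists (lo n); split; [lra|auto]. }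
assert (-2 <= discriminant a b p (hi n) <= 2).
{ apply onto; exists (hi n); split; [lra|auto]. }
destruct (proj1 (onto (-2)) ltac:(lra)) as [xm [xm_band D_xm]].
destruct (proj1 (onto 2) ltac:(lra)) as [xM [xM_band D_xM]].
destruct monotone as [incr|decr].
- assert (discriminant a b p (lo n) <= discriminant a b p xm) by (apply incr; lra).
  assert (discriminant a b p xM <= discriminant a b p (hi n)) by (apply incr; lra).
  split; [rewrite Rabs_left1|rewrite Rabs_right]; lra.
- assert (discriminant a b p xM <= discriminant a b p (lo n)) by (apply decr; lra).
  assert (discriminant a b p (hi n) <= discriminant a b p xm) by (apply decr; lra).
  split; [rewrite Rabs_right|rewrite Rabs_left1]; lra.
Qed.

Lemma band_roots : exists x : nat -> R, forall n, (1 <= n <= p)%nat ->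
  lo n < x n < hi n /\ discriminant a b p (x n) = 0.
Proof.
apply (choice (fun n z => (1 <= n <= p)%nat -> lo n < z < hi n /\ discriminant a b p z = 0)).
intros n; destruct (Compare_dec.le_dec 1 n) as [n_ge1|n_lt1];
  [destruct (Compare_dec.le_dec n p) as [n_le|n_gt]|];
  try (exists 0; intros; lia).
destruct bands as [_ [_ [_ monotone_onto]]].
destruct (proj1 (proj2 (monotone_onto n ltac:(lia)) 0) ltac:(lra)) as [z [z_band D_z]].
destruct (Rabs_discriminant_band_ends n ltac:(lia)) as [D_lo D_hi].
exists z; intros _.
assert (lo n <> z) by (intros <-; rewrite D_z, Rabs_R0 in D_lo; lra).
assert (z <> hi n) by (intros ->; rewrite D_z, Rabs_R0 in D_hi; lra).
repeat split; auto; lra.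
Qed.

Lemma band_length_bound d n : (forall m, 0 < a m) -> hi p - lo 1%nat <= d ->
  (1 <= n <= p)%nat ->
  4 * prod1 p (fun m => a (Z.of_nat m)) <= (hi n - lo n) * d ^ pred p.
Proof.
intros a_pos hull_le hn.
destruct band_roots as [x x_root].
set (P := prod1 p (fun m => a (Z.of_nat m))).
assert (P_pos : 0 < P) by now apply prod1_pos.
assert (factor : forall y, discriminant a b p y = / P * prod1 p (fun i => y - x i)).
{ apply DiscriminantPolynomial.discriminant_root_factor; [lia| |intros i j ? ? ?|].
  - intros m; apply Rgt_not_eq, a_pos.
  - destruct (x_root i ltac:(lia)) as [[_ x_i_lt] _].
    destruct (x_root j ltac:(lia)) as [[x_j_gt _] _].
    assert (hi i <= lo j) by (apply band_hi_le_lo; lia).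
    lra.
  - intros i ? ?; apply (x_root i); lia. }
assert (edge_bound : forall y, lo 1%nat <= y <= hi p ->
          Rabs (discriminant a b p y) = 2 -> 2 * P <= Rabs (y - x n) * d ^ pred p).
{ intros y y_hull D_y.
  rewrite factor, Rabs_mult, Rabs_inv, (Rabs_right P) in D_y by lra.
  apply (Rmult_eq_compat_l P) in D_y.
  rewrite <- Rmult_assoc, Rinv_r, Rmult_1_l in D_y by lra.
  rewrite Rmult_comm, <- D_y.
  apply DiscriminantPolynomial.Rabs_prod1_le; try lia.
  intros i ? ?.
  destruct (x_root i ltac:(lia)) as [[x_i_gt x_i_lt] _].
  destruct (band_in_hull i ltac:(lia)).
  apply Rabs_le; lra. }
destruct (Rabs_discriminant_band_ends n hn) as [D_lo D_hi].
destruct (x_root n hn) as [[x_n_gt x_n_lt] _].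
destruct (band_in_hull n hn).
assert (lo_bound := edge_bound (lo n) ltac:(lra) D_lo).
assert (hi_bound := edge_bound (hi n) ltac:(lra) D_hi).
rewrite Rabs_left in lo_bound by lra.
rewrite Rabs_right in hi_bound by lra.
lra.
Qed.

End SpectralBands.

Lemma ln_band_ratio_le (n : nat) (P L d : R) :
  (0 < n)%nat -> 0 < P -> 0 < L -> 0 < d -> 4 * P <= L * d ^ pred n ->
  ln (4 * d / L) <= INR n * ln (d / Rpower P (/ INR n)).
Proof.
intros n_pos P_pos L_pos d_pos bound.
assert (INR_n : INR n = INR (pred n) + 1).
{ rewrite <- S_INR, Nat.succ_pred_pos; [reflexivity|lia]. }
assert (0 < INR n) by (apply lt_0_INR; lia).
assert (ln_bound : ln (4 * P) <= ln (L * d ^ pred n)).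
{ destruct (Rle_lt_or_eq_dec _ _ bound) as [lt|eq].
  - left; apply ln_increasing; [lra|exact lt].
  - rewrite eq; lra. }
rewrite ln_mult, ln_mult, ln_pow in ln_bound by (try apply pow_lt; lra).
unfold Rdiv.
rewrite ln_mult, ln_Rinv, ln_mult, ln_mult, ln_Rinv, ln_Rpower
  by (try apply Rinv_0_lt_compat; try apply exp_pos; lra).
replace (INR n * (ln d + - (/ INR n * ln P))) with (INR n * ln d - ln P) by (field; lra).
rewrite INR_n in *; lra.
Qed.

Lemma sum1_ge_const (n : nat) (c : R) (g : nat -> R) :
  (forall j, (1 <= j <= n)%nat -> c <= g j) -> INR n * c <= sum1 n g.
Proof.
intros g_ge; unfold sum1.
replace (INR n) with (INR (length (seq 1 n))) by now rewrite length_seq.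
assert (g_ge' : forall j, In j (seq 1 n) -> c <= g j).
{ intros j j_in; apply in_seq in j_in; apply g_ge; lia. }
induction (seq 1 n) as [|m s IH]; simpl length; simpl map; simpl fold_right.
- rewrite INR_0; lra.
- rewrite S_INR.
  assert (c <= g m) by (apply g_ge'; now left).
  assert (INR (length s) * c <= fold_right Rplus 0 (map g s)).
  { apply IH; intros; apply g_ge'; now right. }
  lra.
Qed.

Theorem theorem1p1 (p : nat) (a b : Z -> R) (lo hi : nat -> R) (d : R) :
  (2 <= p)%nat ->
  (forall n : Z, 0 < a n) ->
  (forall n : Z, a (n + Z.of_nat p)%Z = a n) ->
  (forall n : Z, b (n + Z.of_nat p)%Z = b n) ->
  spectral_bands a b p lo hi ->
  hi p - lo 1%nat <= d ->
  let A := Rpower (prod1 p (fun n => a (Z.of_nat n))) (/ INR p) in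
  1 / ln (d / A) <= sum1 p (fun n => 1 / ln (4 * d / (hi n - lo n))).
Proof.
intros p_ge2 a_pos _ _ bands hull_le A.
assert (log_bounds : forall n, (1 <= n <= p)%nat ->
          0 < ln (4 * d / (hi n - lo n)) <= INR p * ln (d / A)).
{ intros n hn.
  assert (lo n < hi n) by (apply (proj1 bands); lia).
  destruct (band_in_hull a b p lo hi bands n hn).
  split.
  - rewrite <- ln_1; apply ln_increasing; [lra|].
    apply Rmult_lt_reg_r with (hi n - lo n); [lra|].
    unfold Rdiv; rewrite Rmult_assoc, Rinv_l; lra.
  - apply ln_band_ratio_le; try lia; try lra.
    + now apply prod1_pos.
    + now apply (band_length_bound a b). }
destruct (log_bounds 1%nat ltac:(lia)) as [ln_pos ln_le].
assert (0 < INR p) by (apply lt_0_INR; lia).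
replace (1 / ln (d / A)) with (INR p * / (INR p * ln (d / A))) by (field; nra).
apply sum1_ge_const; intros n hn.
destruct (log_bounds n hn).
unfold Rdiv; rewrite Rmult_1_l.
apply Rinv_le_contravar; lra.
Qed.
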